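(* Let $\mathcal{P}$ be a profile of unrooted phylogenetic trees whose display graph $G(\mathcal{P})$ is connected, and let $F\subseteq E(G(\mathcal{P}))$. Then $F$ is a legal minimal separator of $\mathrm{LG}(\mathcal{P})$ if and only if $F$ is a nice minimal cut of $G(\mathcal{P})$.
   Context: A phylogenetic tree $T$ is an unrooted tree whose leaves are bijectively labeled by a label set $\mathcal{L}(T)$ (leaves identified with labels; internal vertices have degree at least three). A profile $\mathcal{P}=\{T_1,\dots,T_k\}$ is a finite collection of phylogenetic trees; the internal vertices of distinct trees are disjoint, while leaves with the same label are the same vertex. The display graph $G(\mathcal{P})$ has vertex set $\bigcup_i V(T_i)$ and edge set $\bigcup_i E(T_i)$. For a vertex $u$ of an input tree, $\mathrm{Inc}(u)$ is the set of edges of $G(\mathcal{P})$ incident with $u$. $\mathrm{LG}(\mathcal{P})$ is the line graph of $G(\mathcal{P})$ (vertices are the edges of $G(\mathcal{P})$, adjacent iff they share an endpoint). In a graph $G$, for nonadjacent vertices $a,b$, an $a$-$b$ separator is $U\subset V(G)$ with $a,b$ in different components of $G-U$; it is minimal if no proper subset is an $a$-$b$ separator; $U$ is a minimal separator if it is a minimal $a$-$b$ separator for some nonadjacent $a,b$. A minimal separator $F$ of $\mathrm{LG}(\mathcal{P})$ is legal if for every $T\in\mathcal{P}$ all edges of $T$ lying in $F$ share a common endpoint. A cut of a connected graph $G$ is $F\subseteq E(G)$ with $G-F$ (same vertices, edges of $F$ removed) disconnected; minimal if no proper subset is a cut. A cut $F$ of $G(\mathcal{P})$ is legal if for every $T\in\mathcal{P}$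 there is $u\in V(T)$ with $F\cap E(T)\subseteq\mathrm{Inc}(u)$; it is nice if it is legal and every connected component of $G(\mathcal{P})-F$ contains at least one edge. *)

From mathcomp Require Import all_boot.
Set Implicit Arguments. Unset Strict Implicit. Unset Printing Implicit Defensive.

Definition rconnect (T : finType) (S : {set T}) (adj : rel T) : rel T :=
  connect (fun x y => [&& x \in S, y \in S & adj x y]).

Definition separates (T : finType) (W : {set T}) (adj : rel T) (U : {set T}) (a b : T) :=
  [/\ a \in W :\: U, b \in W :\: U & ~~ rconnect (W :\: U) adj a b].

Definition min_ab_separator (T : finType) (W : {set T}) (adj : rel T) (U : {set T}) (a b : T) :=
  separates W adj U a b /\ (forall U' : {set T}, U' \proper U -> ~ separates W adj U' a b).

Definition minimal_separator (T : finType) (W : {set T}) (adj : rel T) (U : {set T}) :=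
  U \subset W /\
  exists a b, [/\ a \in W, b \in W, ~~ adj a b & min_ab_separator W adj U a b].

Section Trees.
Variable V : finType.

Definition eadj (E : {set {set V}}) : rel V := fun x y => (x != y) && ([set x; y] \in E).

Definition deg (E : {set {set V}}) (v : V) : nat := #|[set e in E | v \in e]|.

Definition is_tree (VT : {set V}) (ET : {set {set V}}) :=
  [/\ VT != set0,
      {in ET, forall e : {set V}, e \subset VT /\ #|e| = 2},
      {in VT &, forall x y, rconnect VT (eadj ET) x y}
    & forall c : seq V, 2 < size c -> uniq c -> ~~ cycle (eadj ET) c].

(* unrooted phylogenetic tree: leaves = vertices of degree <= 1 (identified
   with their labels); internal vertices have degree >= 3 *)
Definition is_phylo_tree (VT : {set V}) (ET : {set {set V}}) :=
  is_tree VT ET /\ {in VT, forall v, deg ET v <= 1 \/ 3 <= deg ET v}.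

(* profile T_0 .. T_(k-1) on the common vertex universe V (= V(G(P))):
   vertices shared by distinct trees are leaves (same label) of both *)
Definition is_profile (k : nat) (VT : 'I_k -> {set V}) (ET : 'I_k -> {set {set V}}) :=
  [/\ forall i, is_phylo_tree (VT i) (ET i),
      forall i j, i != j -> forall v, v \in VT i -> v \in VT j ->
        deg (ET i) v <= 1 /\ deg (ET j) v <= 1
    & forall v : V, exists i, v \in VT i].

Definition disp_edges (k : nat) (ET : 'I_k -> {set {set V}}) : {set {set V}} :=
  \bigcup_(i < k) ET i.

Definition graph_connected (E : {set {set V}}) :=
  forall x y : V, rconnect setT (eadj E) x y.

Definition lg_adj : rel {set V} := fun e f => (e != f) && (e :&: f != set0).

Definition legal_separator (k : nat) (ET : 'I_k -> {set {set V}}) (F : {set {set V}}) :=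
  forall i, exists u : V, forall e, e \in F -> e \in ET i -> u \in e.

Definition is_cut (E F : {set {set V}}) :=
  F \subset E /\ exists x y : V, ~~ rconnect setT (eadj (E :\: F)) x y.

Definition minimal_cut (E F : {set {set V}}) :=
  is_cut E F /\ (forall F' : {set {set V}}, F' \proper F -> ~ is_cut E F').

Definition legal_cut (k : nat) (VT : 'I_k -> {set V}) (ET : 'I_k -> {set {set V}})
  (F : {set {set V}}) :=
  forall i, exists2 u, u \in VT i & forall e, e \in F -> e \in ET i -> u \in e.

(* legal, and every component of G - F contains an edge *)
Definition nice_cut (k : nat) (VT : 'I_k -> {set V}) (ET : 'I_k -> {set {set V}})
  (F : {set {set V}}) :=
  legal_cut VT ET F /\
  forall x : V, exists2 e, e \in disp_edges ET :\: F &
    exists2 y, y \in e & rconnect setT (eadj (disp_edges ET :\: F)) x y.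

End Trees.

From mathcomp Require Import all_boot.
Set Implicit Arguments. Unset Strict Implicit. Unset Printing Implicit Defensive.

(* Walking through the line graph along edges that share a vertex is the same as
   walking through the graph itself, so a set F of edges separates two edges a, b
   of LG(P) iff removing F disconnects an endpoint of a from an endpoint of b.
   Minimality forces every f in F to be a bridge between the two components
   containing those endpoints; hence G - F has exactly two components, each
   containing an edge, and removing any proper subset of F leaves
   G connected.  Conversely, a minimal cut whose two sides contain edges a and b
   gives a minimal a-b separator of LG(P).  Legality is the same condition for
   separators and cuts because every tree is nonempty and its edges join its
   own vertices. *)

Lemma connect_ind (T : finType) (r : rel T) (P : T -> Prop) x y :
  P x -> (forall z w, P z -> r z w -> P w) -> connect r x y -> P y.
Proof.
move=> Px step /connectP[p + ->]; elim: p x Px => //= w p IH x Px /andP[rxw].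
exact: IH (step _ _ Px rxw).
Qed.

Section EdgeSets.
Variable V : finType.
Implicit Types (D E F U : {set {set V}}) (e f g : {set V}) (x y z u v : V).

Lemma eadj_sym D : symmetric (eadj D).
Proof.
by move=> x y; rewrite /eadj eq_sym; congr (_ && (_ \in D)); apply/setP=> z;
  rewrite !inE orbC.
Qed.

Lemma connect_eadjC D x y : connect (eadj D) x y = connect (eadj D) y x.
Proof. exact: (sym_connect_sym (eadj_sym D)). Qed.

Lemma connect_eadj_subset D1 D2 x y :
  D1 \subset D2 -> connect (eadj D1) x y -> connect (eadj D2) x y.
Proof.
move=> sD; apply: connect_sub => u v /andP[nuv uvD]; apply: connect1.
by rewrite /eadj nuv (subsetP sD).
Qed.

Lemma rconnect_setT (r : rel V) x y : rconnect [set: V] r x y = connect r x y.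
Proof. by apply: eq_connect => u v; rewrite !inE. Qed.

Lemma card2_set2 e x y : #|e| = 2 -> x \in e -> y \in e -> x != y -> e = [set x; y].
Proof.
move=> ce xe ye nxy; apply/eqP; rewrite eq_sym eqEcard cards2 nxy ce leqnn andbT.
by apply/subsetP=> z; rewrite !inE => /orP[]/eqP->.
Qed.

Lemma connect_set2 D u v : [set u; v] \in D -> connect (eadj D) u v.
Proof.
case: (eqVneq u v) => [-> _|nuv uvD]; first exact: connect0.
by apply: connect1; rewrite /eadj nuv.
Qed.

Lemma connect_in_edge D e x y :
  #|e| = 2 -> e \in D -> x \in e -> y \in e -> connect (eadj D) x y.
Proof.
move=> ce eD xe ye; case: (eqVneq x y) => [->|nxy]; first exact: connect0.
by apply: connect_set2; rewrite -(card2_set2 ce xe ye nxy).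
Qed.

Lemma rconnect_lg_adj_meet D g g' z :
  g \in D -> g' \in D -> z \in g -> z \in g' -> rconnect D (@lg_adj V) g g'.
Proof.
move=> gD g'D zg zg'; case: (eqVneq g g') => [->|ngg']; first exact: connect0.
apply: connect1; rewrite gD g'D /lg_adj ngg'; apply/set0Pn.
by exists z; rewrite inE zg.
Qed.

Lemma rconnect_lg_adjE D e f x y :
  {in D, forall g, #|g| = 2} -> e \in D -> f \in D -> x \in e -> y \in f ->
  rconnect D (@lg_adj V) e f = connect (eadj D) x y.
Proof.
move=> D2 eD fD xe yf; apply/idP/idP => [/connectP[p pth f_last]|cxy].
  clear fD; subst f; elim: p e x eD xe pth yf => /= [|g p IH] e x eD xe.
    by move=> _ yf; exact: connect_in_edge (D2 _ eD) eD xe yf.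
  case/andP=> /and3P[_ gD /andP[_ /set0Pn[z]]]; rewrite inE => /andP[ze zg] pth yf.
  exact: connect_trans (connect_in_edge (D2 _ eD) eD xe ze) (IH g z gD zg pth yf).
pose P w := forall g, g \in D -> w \in g -> rconnect D (@lg_adj V) e g.
apply: (connect_ind (P := P) _ _ cxy) fD yf => [g gD xg|z w Pz].
  exact: rconnect_lg_adj_meet eD gD xe xg.
case/andP=> _ zwD g gD wg.
apply: connect_trans (Pz _ zwD _) (rconnect_lg_adj_meet zwD gD _ wg);
  by rewrite !inE eqxx ?orbT.
Qed.

Lemma connect_eadj_setU1 D f x y :
  connect (eadj (f |: D)) x y ->
  connect (eadj D) x y \/ exists2 u, u \in f & connect (eadj D) x u.
Proof.
pose P w := connect (eadj D) x w \/ exists2 u, u \in f & connect (eadj D) x u.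
apply: (connect_ind (P := P)); first by left.
move=> z w [cxz|?]; last by right.
move=> /andP[nzw]; rewrite in_setU1 => /orP[/eqP zw_f|zwD].
  by right; exists z; rewrite // -zw_f !inE eqxx.
by left; apply: connect_trans cxz (connect1 _); rewrite /eadj nzw.
Qed.

Definition bridges E F a b :=
  {in F, forall f, exists u v, [/\ f = [set u; v],
    connect (eadj (E :\: F)) a u & connect (eadj (E :\: F)) b v]}.

Definition components_have_edges E F :=
  forall x, exists2 e, e \in E :\: F &
    exists2 y, y \in e & rconnect setT (eadj (E :\: F)) x y.

Section Bridges.
Variable E : {set {set V}}.
Hypothesis E2 : {in E, forall e, #|e| = 2}.
Hypothesis E_connected : forall x y, connect (eadj E) x y.

Lemma card2_edgesD U : {in E :\: U, forall e, #|e| = 2}.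
Proof. by move=> e /setDP[eE _]; exact: E2. Qed.

Lemma bridges_of_minimal F a b : F \subset E ->
  {in F, forall f, connect (eadj (E :\: (F :\ f))) a b} ->
  ~~ connect (eadj (E :\: F)) a b -> bridges E F a b.
Proof.
move=> FE cF ncab f fF.
have sDf : E :\: (F :\ f) \subset f |: (E :\: F).
  by apply/subsetP=> g; rewrite !inE negb_and negbK => /andP[/orP[->|->] ->];
    rewrite ?orbT.
have reach_f c d : connect (eadj (E :\: (F :\ f))) c d ->
    ~~ connect (eadj (E :\: F)) c d -> exists2 u, u \in f & connect (eadj (E :\: F)) c u.
  move=> /(connect_eadj_subset sDf)/connect_eadj_setU1[cd|//] ncd.
  by rewrite cd in ncd.
have [u uf cau] := reach_f _ _ (cF f fF) ncab.
have [v vf cbv] : exists2 v, v \in f & connect (eadj (E :\: F)) b v.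
  by apply: reach_f; rewrite connect_eadjC; [exact: cF|].
have nuv : u != v.
  apply: contra ncab => /eqP uv; rewrite uv in cau.
  by apply: connect_trans cau _; rewrite connect_eadjC.
by exists u, v; rewrite (card2_set2 (E2 (subsetP FE _ fF)) uf vf nuv).
Qed.

Lemma bridges_cover F a b : bridges E F a b ->
  forall z, connect (eadj (E :\: F)) a z \/ connect (eadj (E :\: F)) b z.
Proof.
move=> brF z.
pose P w := connect (eadj (E :\: F)) a w \/ connect (eadj (E :\: F)) b w.
apply: (connect_ind (P := P) _ _ (E_connected a z)); first by left.
move=> z' w Pz' /andP[nz'w z'wE]; case: (boolP ([set z'; w] \in F)) => [z'wF|z'wNF].
  have [u [v [z'w_uv cau cbv]]] := brF _ z'wF.
  have : w \in [set u; v] by rewrite -z'w_uv !inE eqxx orbT.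
  by rewrite !inE => /orP[]/eqP->; [left|right].
have cz'w : connect (eadj (E :\: F)) z' w by apply: connect_set2; rewrite !inE z'wNF.
by case: Pz' => c; [left|right]; exact: connect_trans c cz'w.
Qed.

Lemma bridges_proper_connected F U a b : F \subset E -> bridges E F a b ->
  U \proper F -> forall x y, connect (eadj (E :\: U)) x y.
Proof.
move=> FE brF /properP[UF [f fF fNU]].
have sFU : E :\: F \subset E :\: U := setDS E UF.
have [u [v [f_uv cau cbv]]] := brF _ fF.
have cab : connect (eadj (E :\: U)) a b.
  have cuv : connect (eadj (E :\: U)) u v.
    by apply: connect_set2; rewrite -f_uv !inE fNU (subsetP FE).
  apply: connect_trans (connect_eadj_subset sFU cau) (connect_trans cuv _).
  by rewrite connect_eadjC; exact: connect_eadj_subset sFU cbv.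
have reach_a z : connect (eadj (E :\: U)) a z.
  case: (bridges_cover brF z) => /(connect_eadj_subset sFU) // cbz.
  exact: connect_trans cab cbz.
by move=> x y; apply: connect_trans (reach_a y); rewrite connect_eadjC.
Qed.

Lemma minimal_separator_cut F : F \subset E ->
  minimal_separator E (@lg_adj V) F -> minimal_cut E F /\ components_have_edges E F.
Proof.
move=> FE [_ [a [b [_ _ _ [[aEF bEF nsep] minF]]]]].
have [xa xa_a] : exists xa, xa \in a by apply/set0Pn; rewrite -card_gt0 (card2_edgesD aEF).
have [xb xb_b] : exists xb, xb \in b by apply/set0Pn; rewrite -card_gt0 (card2_edgesD bEF).
have sepE U : a \in E :\: U -> b \in E :\: U ->
    rconnect (E :\: U) (@lg_adj V) a b = connect (eadj (E :\: U)) xa xb.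
  by move=> aEU bEU; apply: rconnect_lg_adjE => //; exact: card2_edgesD.
have ncF : ~~ connect (eadj (E :\: F)) xa xb by rewrite -sepE.
have brF : bridges E F xa xb.
  apply: bridges_of_minimal ncF => // f fF.
  have sFf : E :\: F \subset E :\: (F :\ f) by apply/setDS/subD1set.
  have [aEf bEf] := (subsetP sFf _ aEF, subsetP sFf _ bEF).
  rewrite -sepE //; apply/negPn/negP => nsep_f.
  exact: (minF _ (properD1 fF)).
split; [split|].
- by split=> //; exists xa, xb; rewrite rconnect_setT.
- move=> U UF [_ [x [y]]].
  by rewrite rconnect_setT (bridges_proper_connected FE brF UF).
- by move=> x; case: (bridges_cover brF x) => cx; [exists a | exists b] => //;
    [exists xa | exists xb]; rewrite // rconnect_setT connect_eadjC.
Qed.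

Lemma minimal_cut_separator F : minimal_cut E F -> components_have_edges E F ->
  minimal_separator E (@lg_adj V) F.
Proof.
move=> [[FE [x0 [y0 nc]]] minF] comp; rewrite rconnect_setT in nc.
have brF : bridges E F x0 y0.
  apply: bridges_of_minimal nc => // f fF; apply/negPn/negP => nc_f.
  apply: (minF _ (properD1 fF)); split; first exact: subset_trans (subD1set F f) FE.
  by exists x0, y0; rewrite rconnect_setT.
have [a aEF [xa xa_a]] := comp x0; rewrite rconnect_setT => c0a.
have [b bEF [xb xb_b]] := comp y0; rewrite rconnect_setT => c0b.
have nc_ab : ~~ connect (eadj (E :\: F)) xa xb.
  apply: contra nc => cab; apply: connect_trans c0a (connect_trans cab _).
  by rewrite connect_eadjC.
have [aE bE] : a \in E /\ b \in E by move: aEF bEF; rewrite !inE => /andP[_ ->] /andP[_ ->].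
split=> //; exists a, b; split=> //.
- apply: contra nc_ab => /andP[_ /set0Pn[z]]; rewrite inE => /andP[za zb].
  by apply: connect_trans (connect_in_edge (E2 aE) aEF xa_a za)
                          (connect_in_edge (E2 bE) bEF zb xb_b).
- split; first by split; rewrite // (rconnect_lg_adjE (@card2_edgesD F) aEF bEF xa_a xb_b).
  move=> U UF [aEU bEU /negP]; apply.
  rewrite (rconnect_lg_adjE (@card2_edgesD U) aEU bEU xa_a xb_b).
  exact: (bridges_proper_connected FE brF UF xa xb).
Qed.

End Bridges.

Lemma legal_separator_cut k (VT : 'I_k -> {set V}) (ET : 'I_k -> {set {set V}}) F :
  (forall i, is_tree (VT i) (ET i)) -> legal_separator ET F <-> legal_cut VT ET F.
Proof.
move=> trees; split=> [legF i|legF i]; last by have [u _ uF] := legF i; exists u.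
have [u uF] := legF i; have [/set0Pn[w wVT] edgesVT _ _] := trees i.
case: (pickP [pred e | (e \in F) && (e \in ET i)]) => [e /andP[eF eET]|noFi].
  have [/subsetP eVT _] := edgesVT e eET.
  by exists u => //; apply/eVT/uF.
by exists w => // e eF eET; move: (noFi e); rewrite /= eF eET.
Qed.

End EdgeSets.

Theorem lemma2 (V : finType) (k : nat) (VT : 'I_k -> {set V})
  (ET : 'I_k -> {set {set V}}) (F : {set {set V}}) :
  is_profile VT ET ->
  graph_connected (disp_edges ET) ->
  F \subset disp_edges ET ->
  (minimal_separator (disp_edges ET) (@lg_adj V) F /\ legal_separator ET F) <->
  (minimal_cut (disp_edges ET) F /\ nice_cut VT ET F).
Proof.
move=> [phylo _ _] connG FE.
have trees i : is_tree (VT i) (ET i) by have [] := phylo i.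
have E2 : {in disp_edges ET, forall e : {set V}, #|e| = 2}.
  by move=> e /bigcupP[i _ eET]; have [_ /(_ e eET)[]] := trees i.
have connE x y : connect (eadj (disp_edges ET)) x y by rewrite -rconnect_setT.
have legalE := legal_separator_cut F trees.
split=> [[/(minimal_separator_cut E2 connE FE)[minF compF] /legalE legF]|].
  by split.
move=> [minF [/legalE legF compF]].
by split=> //; exact: minimal_cut_separator.
Qed.
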